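(* Let $k\in\mathbb{N}$ and let $F\colon S_{\ell_\infty^k}\to S^+_{\ell_1^k}$ be any map. Then the map $G\colon S_{\ell_\infty^k}\to S^+_{\ell_1^k}$ given by \[G=\frac1{k!}\sum_{\pi\in\mathrm{Per}_k}P_{\pi^{-1}}\circ F\circ P_\pi\] is well defined, equivariant with respect to basis permutations, and satisfies $\omega_G\le\omega_F$. Furthermore, if $F$ is support preserving, then so is $G$.
   Context: $S_{\ell_\infty^k}$ is the unit sphere of $(\mathbb{R}^k,\|\cdot\|_\infty)$; $S^+_{\ell_1^k}=\{x\in\mathbb{R}^k:\|x\|_1=1, x_i\ge0\ \forall i\}$. $\mathrm{Per}_k$ is the group of permutations of $\{1,\dots,k\}$; $P_\pi(x_j)_{j=1}^k=(x_{\pi(j)})_{j=1}^k$. Equivariant with respect to basis permutations: $G(P_\pi x)=P_\pi G(x)$ for all $x,\pi$. $\omega_F(t)=\sup\{\|F(x)-F(y)\|_1:\|x-y\|_\infty\le t\}$. Support preserving: $\mathrm{supp}(F(x))=\mathrm{supp}(x)$ for all $x$, where $\mathrm{supp}(x)=\{i:x_i\neq0\}$. *)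

From HB Require Import structures.
From mathcomp Require Import all_boot all_order all_algebra all_fingroup.
From mathcomp Require Import all_classical all_reals.
From mathcomp Require Import constructive_ereal ereal.
Set Implicit Arguments. Unset Strict Implicit. Unset Printing Implicit Defensive.
Import Order.TTheory GRing.Theory Num.Theory.
Local Open Scope ring_scope.
Local Open Scope classical_set_scope.

Definition normInf (R : realType) (k : nat) (x : 'I_k -> R) : R :=
  \big[Num.max/0]_(i < k) `|x i|.
Definition norm1 (R : realType) (k : nat) (x : 'I_k -> R) : R :=
  \sum_(i < k) `|x i|.

Definition SInf (R : realType) (k : nat) : set ('I_k -> R) :=
  [set x | normInf x = 1].
Definition S1plus (R : realType) (k : nat) : set ('I_k -> R) :=
  [set x | norm1 x = 1 /\ forall i, 0 <= x i].

Definition Pperm (R : realType) (k : nat) (pi : 'S_k) (x : 'I_k -> R) : 'I_k -> R :=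
  fun j => x (pi j).

Definition symmetrize (R : realType) (k : nat) (F : ('I_k -> R) -> ('I_k -> R))
    (x : 'I_k -> R) : 'I_k -> R :=
  fun j => (k`!%:R)^-1 * \sum_(pi : 'S_k) Pperm (pi^-1)%g (F (Pperm pi x)) j.

Definition omega (R : realType) (k : nat) (F : ('I_k -> R) -> ('I_k -> R)) (t : R)
  : \bar R :=
  ereal_sup [set e : \bar R | exists x y, [/\ @SInf R k x, @SInf R k y,
     normInf (fun i => x i - y i) <= t &
     e = (norm1 (fun i => F x i - F y i))%:E] ].

Definition supp (R : realType) (k : nat) (x : 'I_k -> R) : {set 'I_k} :=
  [set i | x i != 0].

From Pilot Require Import Defs.
From HB Require Import structures.
From mathcomp Require Import all_boot all_order all_algebra all_fingroup.
From mathcomp Require Import all_classical all_reals.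
From mathcomp Require Import constructive_ereal ereal.
Import Order.TTheory GRing.Theory Num.Theory.
Local Open Scope ring_scope.
Local Open Scope classical_set_scope.

(* Permutations of coordinates are isometries of both the sup norm and the l1
   norm, so each conjugate P_{pi^-1} o F o P_pi maps the sphere to the simplex,
   preserves supports when F does, and has the same modulus of continuity as F.
   Averaging them keeps values in the convex simplex, can only shrink l1
   distances (triangle inequality), keeps the common support (the summands are
   nonnegative), and is equivariant because precomposing with P_s only
   reindexes the sum by pi |-> pi s. *)

(* Unqualified [norm1] would resolve to the group-theoretic [norm1] of fingroup. *)

Section Mean.
Context {R : realType} {k : nat} {I : finType}.
Hypothesis card_gt0 : (0 < #|I|)%N.

Definition mean (f : I -> 'I_k -> R) : 'I_k -> R :=
  fun j => #|I|%:R^-1 * \sum_i f i j.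

Lemma card_invr_ge0 : 0 <= #|I|%:R^-1 :> R.
Proof. by rewrite invr_ge0 ler0n. Qed.

Lemma mean_cst (c : R) : #|I|%:R^-1 * \sum_(i : I) c = c.
Proof.
by rewrite sumr_const -[c *+ _]mulr_natr mulrCA mulVf ?mulr1 // pnatr_eq0 -lt0n.
Qed.

Lemma mean_ge0 (f : I -> 'I_k -> R) :
  (forall i j, 0 <= f i j) -> forall j, 0 <= mean f j.
Proof. by move=> f_ge0 j; rewrite mulr_ge0 ?card_invr_ge0 ?sumr_ge0. Qed.

Lemma S1plus_mean (f : I -> 'I_k -> R) :
  (forall i, S1plus (f i)) -> S1plus (mean f).
Proof.
move=> Sf; have f_ge0 i j : 0 <= f i j by case: (Sf i).
split; last exact: mean_ge0.
rewrite /Defs.norm1; under eq_bigr => j _ do rewrite ger0_norm ?mean_ge0 //.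
rewrite -mulr_sumr exchange_big -[RHS](mean_cst 1); congr (_ * _).
apply: eq_bigr => i _; case: (Sf i) => <- _.
by apply: eq_bigr => j _; rewrite ger0_norm.
Qed.

Lemma norm1_mean_sub_le (f g : I -> 'I_k -> R) (r : R) :
  (forall i, Defs.norm1 (fun j => f i j - g i j) <= r) ->
  Defs.norm1 (fun j => mean f j - mean g j) <= r.
Proof.
move=> fg_le; rewrite -(mean_cst r).
apply: (@le_trans _ _ (#|I|%:R^-1 * \sum_i Defs.norm1 (fun j => f i j - g i j))).
- rewrite /Defs.norm1 exchange_big mulr_sumr; apply: ler_sum => j _.
  rewrite -mulrBr -sumrB normrM ger0_norm ?card_invr_ge0 //.
  by rewrite ler_wpM2l ?card_invr_ge0 ?ler_norm_sum.
- by rewrite ler_wpM2l ?card_invr_ge0 ?ler_sum.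
Qed.

Lemma norm1_mean_sub_le_ereal (f g : I -> 'I_k -> R) (M : \bar R) :
  (forall i, ((Defs.norm1 (fun j => f i j - g i j))%:E <= M)%E) ->
  ((Defs.norm1 (fun j => mean f j - mean g j))%:E <= M)%E.
Proof.
case: M => [r | _ | fg_le]; last 2 first.
- exact: leey.
- by have [i _] := card_gt0P card_gt0; have := fg_le i; rewrite leeNy_eq.
by move=> fg_le; rewrite lee_fin norm1_mean_sub_le // => i; rewrite -lee_fin.
Qed.

Lemma supp_mean (f : I -> 'I_k -> R) (A : {set 'I_k}) :
  (forall i j, 0 <= f i j) -> (forall i, supp (f i) = A) -> supp (mean f) = A.
Proof.
move=> f_ge0 supp_f; have [i0 _] := card_gt0P card_gt0.
apply/setP => j; have fj0 i : (f i j == 0) = (j \notin A).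
  by rewrite -(supp_f i) inE negbK.
rewrite !inE mulf_eq0 invr_eq0 pnatr_eq0 eqn0Ngt card_gt0 /= psumr_eq0 //.
apply/idP/idP => [/allPn [i _] | jA]; first by rewrite /= fj0 negbK.
by apply/allPn; exists i0; rewrite ?mem_index_enum //= fj0 jA.
Qed.

End Mean.

Section Permutations.
Context {R : realType} {k : nat}.
Implicit Types (s t : 'S_k) (x y : 'I_k -> R).

Lemma PpermM s t x : Pperm (s * t)%g x = Pperm s (Pperm t x).
Proof. by apply/funext => j; rewrite /Pperm permM. Qed.

Lemma PpermK s x : Pperm s^-1%g (Pperm s x) = x.
Proof. by apply/funext => j; rewrite /Pperm permKV. Qed.

Lemma normInf_Pperm s x : normInf (Pperm s x) = normInf x.
Proof. by rewrite /normInf [RHS](reindex_inj (@perm_inj _ s)). Qed.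

Lemma norm1_Pperm s x : Defs.norm1 (Pperm s x) = Defs.norm1 x.
Proof. by rewrite /Defs.norm1 [RHS](reindex_inj (@perm_inj _ s)). Qed.

Lemma SInf_Pperm s {x} : SInf x -> SInf (Pperm s x).
Proof. by rewrite /SInf /= normInf_Pperm. Qed.

Lemma S1plus_Pperm s x : S1plus x -> S1plus (Pperm s x).
Proof.
by rewrite /S1plus /= norm1_Pperm => -[-> x_ge0]; split => // i; apply: x_ge0.
Qed.

Lemma supp_Pperm s x : supp (Pperm s x) = s @^-1: supp x.
Proof. by apply/setP => j; rewrite !inE. Qed.

Lemma eq_supp_Pperm s {x y} :
  supp x = supp y -> supp (Pperm s x) = supp (Pperm s y).
Proof. by rewrite !supp_Pperm => ->. Qed.

End Permutations.

Section Symmetrize.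
Context {R : realType} {k : nat}.
Variable (F : ('I_k -> R) -> 'I_k -> R).

Lemma card_Sn_gt0 : (0 < #|'S_k|)%N.
Proof. by rewrite card_Sn fact_gt0. Qed.

Lemma symmetrizeE x :
  symmetrize F x = mean (fun pi : 'S_k => Pperm pi^-1%g (F (Pperm pi x))).
Proof. by rewrite /mean card_Sn. Qed.

Lemma symmetrize_Pperm s x : symmetrize F (Pperm s x) = Pperm s (symmetrize F x).
Proof.
rewrite !symmetrizeE; apply/funext => j; rewrite /mean [RHS]/Pperm; congr (_ * _).
rewrite (reindex_inj (mulIg s^-1)%g); apply: eq_bigr => pi _.
by rewrite -PpermM mulgKV invMg invgK PpermM.
Qed.

Hypothesis F_S1plus : forall x, SInf x -> S1plus (F x).

Lemma S1plus_symmetrize x : SInf x -> S1plus (symmetrize F x).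
Proof.
move=> Sx; rewrite symmetrizeE.
apply: S1plus_mean => [|pi]; first exact: card_Sn_gt0.
exact/S1plus_Pperm/F_S1plus/SInf_Pperm.
Qed.

Lemma omega_symmetrize_le t : (omega (symmetrize F) t <= omega F t)%E.
Proof.
apply: ge_ereal_sup => _ [x [y [Sx Sy xy ->]]].
rewrite !symmetrizeE.
apply: norm1_mean_sub_le_ereal => [|pi]; first exact: card_Sn_gt0.
rewrite (norm1_Pperm pi^-1%g (fun j => F (Pperm pi x) j - F (Pperm pi y) j)).
apply: ereal_sup_ubound; exists (Pperm pi x), (Pperm pi y).
split; [exact: SInf_Pperm | exact: SInf_Pperm | | by []].
by rewrite (normInf_Pperm pi (fun j => x j - y j)).
Qed.

Lemma supp_symmetrize x : (forall x, SInf x -> supp (F x) = supp x) ->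
  SInf x -> supp (symmetrize F x) = supp x.
Proof.
move=> supp_F Sx; rewrite symmetrizeE; apply: supp_mean => [||pi].
- exact: card_Sn_gt0.
- by move=> pi j; case: (F_S1plus _ (SInf_Pperm pi Sx)) => _ ->.
- by rewrite (eq_supp_Pperm _ (supp_F _ (SInf_Pperm pi Sx))) PpermK.
Qed.

End Symmetrize.

Theorem lemma4p3 (R : realType) (k : nat) (F : ('I_k -> R) -> ('I_k -> R))
  (HF : forall x, @SInf R k x -> @S1plus R k (F x)) :
  let G := symmetrize F in
  [/\ (forall x, @SInf R k x -> @S1plus R k (G x)),
      (forall (pi : 'S_k) x, @SInf R k x -> G (Pperm pi x) = Pperm pi (G x)),
      (forall t : R, (omega G t <= omega F t)%E) &
      ((forall x, @SInf R k x -> supp (F x) = supp x) ->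
        forall x, @SInf R k x -> supp (G x) = supp x)].
Proof.
split.
- exact: S1plus_symmetrize.
- by move=> pi x _; apply: symmetrize_Pperm.
- exact: omega_symmetrize_le.
- by move=> supp_F x; apply: supp_symmetrize.
Qed.
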